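(* Let $G$ be a $\lambda$-graph and $Q$ a query over $G$. Then $Q^{\Downarrow}$ is a bisimulation if and only if there exists a bisimulation on the nodes of $G$ containing $Q$.
   Context: A pre-$\lambda$-graph is a directed graph whose nodes are of four kinds: an application node $@(n_1,n_2)$ has exactly two children, its left child $n_1$ and its right child $n_2$; an abstraction node $\lambda(n)$ has exactly one child, its body $n$; a free variable node has no children and carries an atom $\mathrm{id}(n)$ from a fixed set of atoms, distinct free variable nodes carrying distinct atoms; a bound variable node $\mathrm{var}(l)$ has exactly one outgoing binding edge, to an abstraction node $l$ (its binder). A trace is a finite sequence of directions from $\{\swarrow,\downarrow,\searrow\}$; $\epsilon$ is the empty trace and $d\cdot\tau$ is the trace $\tau$ extended by one final step $d$. Paths $n\xrightarrow{\tau}m$ are defined inductively: $n\xrightarrow{\epsilon}n$; if $n\xrightarrow{\tau}\lambda(m)$ then $n\xrightarrow{\downarrow\cdot\tau}m$; if $n\xrightarrow{\tau}@(m_1,m_2)$ then $n\xrightarrow{\swarrow\cdot\tau}m_1$ and $n\xrightarrow{\searrow\cdot\tau}m_2$ (binding edges are never followed). The path $n\xrightarrow{\tau}$ crosses a node $m$ if either $n\xrightarrow{\tau}m$, or $\tau=d\cdot\tau'$ and $n\xrightarrow{\tau'}$ crosses $m$. A root is a node $r$ such that the only path ending in $r$ has the empty trace. A node $m$ dominates $n$ if every path from a root to $n$ crosses $m$. A $\lambda$-graph is a pre-$\lambda$-graph that has finitely many nodes, is acyclic ($n\xrightarrow{\tau}n$ holds only for $\tau=\epsilon$), and is dominated (every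 bound variable node $\mathrm{var}(l)$ is dominated by its binder $l$). Two nodes are homogeneous if both are application nodes, or both abstraction nodes, or both free variable nodes, or both bound variable nodes; a binary relation $R$ on nodes is homogeneous if it only relates homogeneous nodes. Rules: $(\swarrow)$: $@(n_1,n_2)\,R\,@(m_1,m_2)$ implies $n_1\,R\,m_1$; $(\searrow)$: $@(n_1,n_2)\,R\,@(m_1,m_2)$ implies $n_2\,R\,m_2$; $(\downarrow)$: $\lambda(n)\,R\,\lambda(m)$ implies $n\,R\,m$; $(\circlearrowright)$: $\mathrm{var}(n)\,R\,\mathrm{var}(m)$ implies $n\,R\,m$. $R$ is propagated if closed under $(\swarrow),(\downarrow),(\searrow)$. A bisimulation is a homogeneous propagated relation closed also under $(\circlearrowright)$. $R^{\Downarrow}$ (propagation) is the smallest propagated relation containing $R$. A query over $G$ is a binary relation on the roots of $G$. *)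

From mathcomp Require Import all_boot.
Set Implicit Arguments.
Unset Strict Implicit.
Unset Printing Implicit Defensive.

Inductive node_kind (V Atom : Type) : Type :=
| App : V -> V -> node_kind V Atom
| Abs : V -> node_kind V Atom
| FVar : Atom -> node_kind V Atom
| BVar : V -> node_kind V Atom.
Arguments App {V Atom}. Arguments Abs {V Atom}. Arguments FVar {V Atom}. Arguments BVar {V Atom}.

Section Graphs.
Variables (V : finType) (Atom : Type) (lab : V -> node_kind V Atom).

Definition is_abs (n : V) : Prop := exists m, lab n = Abs m.

Definition pre_lambda_graph : Prop :=
  (forall n l, lab n = BVar l -> is_abs l) /\
  (forall n m a b, lab n = FVar a -> lab m = FVar b -> a = b -> n = m).

Inductive dir := SW | DOWN | SE.

(* Traces: the head of the list is the LAST step, so d :: tau = d . tau. *)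
Definition trace := list dir.

Inductive path : V -> trace -> V -> Prop :=
| path_nil n : path n nil n
| path_down n tau m m' : path n tau m -> lab m = Abs m' -> path n (DOWN :: tau) m'
| path_sw n tau m m1 m2 : path n tau m -> lab m = App m1 m2 -> path n (SW :: tau) m1
| path_se n tau m m1 m2 : path n tau m -> lab m = App m1 m2 -> path n (SE :: tau) m2.

Fixpoint crosses (n : V) (tau : trace) (m : V) : Prop :=
  path n tau m \/
  match tau with
  | nil => False
  | _ :: tau' => crosses n tau' m
  end.

Definition is_root (r : V) : Prop := forall n tau, path n tau r -> tau = nil.

Definition dominates (m n : V) : Prop :=
  forall r tau, is_root r -> path r tau n -> crosses r tau m.

Definition acyclic : Prop := forall n tau, path n tau n -> tau = nil.

Definition dominated : Prop := forall n l, lab n = BVar l -> dominates l n.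

(* V is a finType, so the graph has finitely many nodes. *)
Definition lambda_graph : Prop := pre_lambda_graph /\ acyclic /\ dominated.

Definition homogeneous_nodes (n m : V) : Prop :=
  match lab n, lab m with
  | App _ _, App _ _ | Abs _, Abs _ | FVar _, FVar _ | BVar _, BVar _ => True
  | _, _ => False
  end.

Definition homogeneous (R : V -> V -> Prop) : Prop :=
  forall n m, R n m -> homogeneous_nodes n m.

Definition propagated (R : V -> V -> Prop) : Prop :=
  (forall n m n1 n2 m1 m2, R n m -> lab n = App n1 n2 -> lab m = App m1 m2 -> R n1 m1) /\
  (forall n m n' m', R n m -> lab n = Abs n' -> lab m = Abs m' -> R n' m') /\
  (forall n m n1 n2 m1 m2, R n m -> lab n = App n1 n2 -> lab m = App m1 m2 -> R n2 m2).

Definition binder_closed (R : V -> V -> Prop) : Prop :=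
  forall n m l l', R n m -> lab n = BVar l -> lab m = BVar l' -> R l l'.

Definition bisimulation (R : V -> V -> Prop) : Prop :=
  homogeneous R /\ propagated R /\ binder_closed R.

(* R^Downarrow: the smallest propagated relation containing R *)
Inductive propagation (R : V -> V -> Prop) : V -> V -> Prop :=
| prop_base n m : R n m -> propagation R n m
| prop_sw n m n1 n2 m1 m2 : propagation R n m -> lab n = App n1 n2 ->
    lab m = App m1 m2 -> propagation R n1 m1
| prop_down n m n' m' : propagation R n m -> lab n = Abs n' ->
    lab m = Abs m' -> propagation R n' m'
| prop_se n m n1 n2 m1 m2 : propagation R n m -> lab n = App n1 n2 ->
    lab m = App m1 m2 -> propagation R n2 m2.

Definition query (Q : V -> V -> Prop) : Prop :=
  forall n m, Q n m -> is_root n /\ is_root m.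

End Graphs.

From Pilot Require Import Defs.
From mathcomp Require Import all_boot.

Set Implicit Arguments.
Unset Strict Implicit.
Unset Printing Implicit Defensive.

(* One direction is immediate (take R := Q^⇓).  Conversely Q^⇓ ⊆ R because
   Q^⇓ is the least propagated relation containing Q; hence Q^⇓ is
   homogeneous, and it is propagated by construction.  The real content is
   closure under binders.  Q^⇓ relates exactly the endpoints of paths with a
   common trace t from roots r Q r'.  If var(l) Q^⇓ var(l'), dominance puts l
   and l' on these two paths, at the ends of suffixes t1, t2 of t.  Were, say,
   t2 = ρ·t1 with ρ nonempty, then R (which simulates paths) would relate l
   both to l' and to the node k reached from r' by t1, with k -ρ-> l'; pumping
   this loop through R yields paths of every length, contradicting acyclicity
   in a finite graph.  So t1 = t2, and l Q^⇓ l'. *)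

Section LambdaGraphs.
Variables (Atom : Type) (V : finType) (lab : V -> node_kind V Atom).
Local Notation path := (Defs.path lab).

Lemma path_cat n t1 k t2 m : path n t1 k -> path k t2 m -> path n (t2 ++ t1) m.
Proof.
move=> p1 p2; elim: p2 p1 => [//|? ? ? ? _ IH E|? ? ? ? ? _ IH E|? ? ? ? ? _ IH E] p1.
- exact: path_down (IH p1) E.
- exact: path_sw (IH p1) E.
- exact: path_se (IH p1) E.
Qed.

Lemma path_catP n t1 t2 m : path n (t2 ++ t1) m -> exists k, path n t1 k /\ path k t2 m.
Proof.
elim: t2 m => [|d t2 IH] m /=; first by exists m; split=> //; constructor.
move=> p; inversion p as [|? ? m0 ? p0 E|? ? m0 ? ? p0 E|? ? m0 ? ? p0 E]; subst;
  have [k [pk pkm]] := IH _ p0; exists k; split=> //.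
- exact: path_down pkm E.
- exact: path_sw pkm E.
- exact: path_se pkm E.
Qed.

Lemma path_det n t m m' : path n t m -> path n t m' -> m = m'.
Proof.
move=> p; elim: p m' => [?|? ? ? ? _ IH E|? ? ? ? ? _ IH E|? ? ? ? ? _ IH E] z pz;
  inversion pz as [|? ? ? ? p' E'|? ? ? ? ? p' E'|? ? ? ? ? p' E']; subst => //;
  by move: E'; rewrite -(IH _ p') E => -[].
Qed.

Lemma crosses_path n t m : crosses lab n t m -> exists s t', t = s ++ t' /\ path n t' m.
Proof.
elim: t => [|d t IH] /= [p|c] //.
- by exists [::], [::].
- by exists [::], (d :: t).
- by have [s [t' [-> p]]] := IH c; exists (d :: s), t'.
Qed.

Lemma cat_suffix (s1 s2 t1 t2 : trace) :
  s1 ++ t1 = s2 ++ t2 -> size t1 <= size t2 -> exists r, t2 = r ++ t1.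
Proof.
elim: s2 s1 => [|d s2 IH] [|e s1] /= E.
- by exists [::].
- by exists (e :: s1).
- by rewrite E /= size_cat ltnNge leq_addl.
- by case: E => _ E; apply: IH E.
Qed.

Section Acyclic.
Hypothesis acyc : acyclic lab.

Lemma path_distinct_visits n t m : path n t m ->
  exists s : seq V, [/\ size s = (size t).+1, uniq s &
    forall x, x \in s -> exists a b, t = a ++ b /\ path n b x].
Proof.
have step n' d t' m' : path n' (d :: t') m' ->
  (exists s : seq V, [/\ size s = (size t').+1, uniq s &
     forall x, x \in s -> exists a b, t' = a ++ b /\ path n' b x]) ->
  exists s : seq V, [/\ size s = (size (d :: t')).+1, uniq s &
     forall x, x \in s -> exists a b, d :: t' = a ++ b /\ path n' b x].
  move=> p [s [size_s uniq_s visits]]; exists (m' :: s); split.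
  - by rewrite /= size_s.
  - rewrite /= uniq_s andbT; apply/negP => /visits [a [b [Et pb]]].
    have [k [pk pkm]] : exists k, path n' b k /\ path k (d :: a) m'
      by apply: path_catP; rewrite /= -Et.
    by move: pkm; rewrite (path_det pk pb) => /acyc.
  - move=> x; rewrite inE => /predU1P [->|/visits [a [b [-> pb]]]].
    + by exists [::], (d :: t').
    + by exists (d :: a), b.
elim=> [x|? ? ? ? p IH E|? ? ? ? ? p IH E|? ? ? ? ? p IH E].
- exists [:: x]; split=> // y; rewrite inE => /eqP ->.
  by exists [::], [::]; split=> //; constructor.
- exact: step (path_down p E) IH.
- exact: step (path_sw p E) IH.
- exact: step (path_se p E) IH.
Qed.

Lemma path_size_lt_card n t m : path n t m -> size t < #|V|.
Proof.
case/path_distinct_visits => s [size_s uniq_s _].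
by rewrite cardE -size_s uniq_leq_size // => x _; rewrite mem_enum.
Qed.

End Acyclic.

Lemma homogeneous_nodes_sym n m : homogeneous_nodes lab n m -> homogeneous_nodes lab m n.
Proof. by rewrite /homogeneous_nodes; case: (lab n); case: (lab m). Qed.

Lemma simulate (R : V -> V -> Prop) : homogeneous lab R -> propagated lab R ->
  forall x t x' y, path x t x' -> R x y -> exists2 y', path y t y' & R x' y'.
Proof.
move=> Rh [Rsw [Rdown Rse]] x t x' y.
elim=> [?|? ? m ? _ IH E|? ? m ? ? _ IH E|? ? m ? ? _ IH E] Rxy;
  first by exists y => //; constructor.
all: have [w pw Rmw] := IH Rxy; have := Rh _ _ Rmw; rewrite /homogeneous_nodes E.
all: case Ew: (lab w) => [a b|a|a|a] // _.
- by exists a; [exact: path_down pw Ew | exact: Rdown Rmw E Ew].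
- by exists a; [exact: path_sw pw Ew | exact: Rsw Rmw E Ew].
- by exists b; [exact: path_se pw Ew | exact: Rse Rmw E Ew].
Qed.

Definition converse (R : V -> V -> Prop) : V -> V -> Prop := fun n m => R m n.

Lemma converse_homogeneous R : homogeneous lab R -> homogeneous lab (converse R).
Proof. by move=> Rh n m /Rh /homogeneous_nodes_sym. Qed.

Lemma converse_propagated R : propagated lab R -> propagated lab (converse R).
Proof.
case=> Rsw [Rdown Rse]; split; last split; rewrite /converse.
- by move=> ? ? ? ? ? ? Rmn En Em; apply: Rsw Rmn Em En.
- by move=> ? ? ? ? Rmn En Em; apply: Rdown Rmn Em En.
- by move=> ? ? ? ? ? ? Rmn En Em; apply: Rse Rmn Em En.
Qed.

Section NoLoop.
Variable R : V -> V -> Prop.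
Hypotheses (acyc : acyclic lab) (Rh : homogeneous lab R) (Rp : propagated lab R).

(* Two R-predecessors of the same node cannot be linked by a nonempty path:
   going forth along R and back along R iterates the loop x -r-> z, producing
   paths of unbounded length. *)
Lemma no_loop_through x y z r : R x y -> R z y -> path x r z -> r = [::].
Proof.
move=> Rxy Rzy pxz.
have pump k : exists t w, path x t w /\ size t = k * size r.
  elim: k => [|k [t [w [pxw size_t]]]]; first by exists [::], x; split=> //; constructor.
  have [w1 pyw1 _] := simulate Rh Rp pxw Rxy.
  have [w2 pzw2 _] := simulate (converse_homogeneous Rh) (converse_propagated Rp) pyw1 Rzy.
  by exists (t ++ r), w2; rewrite size_cat size_t mulSn addnC; split=> //; exact: path_cat pxz pzw2.
have [t [w [pxw size_t]]] := pump #|V|.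
case: r pxz {pump} size_t => // d r _ size_t.
by move: (path_size_lt_card acyc pxw); rewrite size_t ltnNge leq_pmulr.
Qed.

End NoLoop.

Lemma equal_depth (R : V -> V -> Prop) r r' t rho l l' :
  acyclic lab -> homogeneous lab R -> propagated lab R ->
  R r r' -> path r t l -> path r' (rho ++ t) l' -> R l l' -> rho = [::].
Proof.
move=> acyc Rh Rp Rrr' prl /path_catP [k [pr'k pkl']] Rll'.
have [k' pr'k' Rlk'] := simulate Rh Rp prl Rrr'.
rewrite (path_det pr'k' pr'k) in Rlk'.
exact: (no_loop_through (y := l) acyc (converse_homogeneous Rh)
  (converse_propagated Rp) Rlk' Rll' pkl').
Qed.

Section Propagation.
Variable Q : V -> V -> Prop.

Lemma propagation_propagated : propagated lab (propagation lab Q).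
Proof.
split; last split=> ? ? ? ?.
- by move=> ? ? ? ?; apply: prop_sw.
- exact: prop_down.
- by move=> ? ?; apply: prop_se.
Qed.

Lemma propagation_least R : propagated lab R -> (forall n m, Q n m -> R n m) ->
  forall n m, propagation lab Q n m -> R n m.
Proof. by case=> Rsw [Rdown Rse] QR n m; elim=> *; eauto. Qed.

Lemma propagation_copath n m : propagation lab Q n m ->
  exists r r' t, [/\ Q r r', path r t n & path r' t m].
Proof.
elim=> [{}n {}m Qnm|? ? ? ? ? ? _ [r [r' [t [Q' p p']]]] E E'
  |? ? ? ? _ [r [r' [t [Q' p p']]]] E E'|? ? ? ? ? ? _ [r [r' [t [Q' p p']]]] E E'].
- by exists n, m, [::]; split=> //; constructor.
- by exists r, r', (SW :: t); split=> //; [exact: path_sw p E | exact: path_sw p' E'].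
- by exists r, r', (DOWN :: t); split=> //; [exact: path_down p E | exact: path_down p' E'].
- by exists r, r', (SE :: t); split=> //; [exact: path_se p E | exact: path_se p' E'].
Qed.

Lemma copath_propagation r r' t n m :
  Q r r' -> path r t n -> path r' t m -> propagation lab Q n m.
Proof.
move=> Qrr' p; elim: p Qrr' m => [?|? ? ? ? _ IH E|? ? ? ? ? _ IH E|? ? ? ? ? _ IH E]
  Qrr' z pz; inversion pz as [|? ? ? ? pm Em|? ? ? ? ? pm Em|? ? ? ? ? pm Em]; subst.
- exact: prop_base.
- exact: prop_down (IH Qrr' _ pm) E Em.
- exact: prop_sw (IH Qrr' _ pm) E Em.
- exact: prop_se (IH Qrr' _ pm) E Em.
Qed.

(* The key step: in a λ-graph, if a bisimulation contains a query Q then Q^⇓ is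
   closed under binders, since Q^⇓-related bound variables have binders at the
   same depth below the Q-related roots. *)
Lemma propagation_binder_closed R : acyclic lab -> dominated lab -> query lab Q ->
  bisimulation lab R -> (forall n m, Q n m -> R n m) ->
  binder_closed lab (propagation lab Q).
Proof.
move=> acyc dom qQ [Rh [Rp Rb]] QR n m l l' Qnm En Em.
have Rll' := Rb _ _ _ _ (propagation_least Rp QR Qnm) En Em.
have [r [r' [t [Qrr' prn pr'm]]]] := propagation_copath Qnm.
have [root_r root_r'] := qQ _ _ Qrr'.
have [s1 [t1 [Et1 prl]]] := crosses_path (dom _ _ En _ _ root_r prn).
have [s2 [t2 [Et2 pr'l']]] := crosses_path (dom _ _ Em _ _ root_r' pr'm).
have Et : s1 ++ t1 = s2 ++ t2 by rewrite -Et1 -Et2.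
suff same_depth : t1 = t2 by apply: copath_propagation Qrr' prl _; rewrite same_depth.
have Rrr' := QR _ _ Qrr'.
case: (leqP (size t1) (size t2)) => [|/ltnW] le_t.
- have [rho Et2'] := cat_suffix Et le_t; rewrite Et2' in pr'l' *.
  by rewrite (equal_depth acyc Rh Rp Rrr' prl pr'l' Rll').
- have [rho Et1'] := cat_suffix (esym Et) le_t; rewrite Et1' in prl *.
  by rewrite (@equal_depth (converse R) _ _ _ _ _ _ acyc (converse_homogeneous Rh)
    (converse_propagated Rp) Rrr' pr'l' prl Rll').
Qed.

End Propagation.

End LambdaGraphs.

Theorem mainTheorem10 (Atom : Type) (V : finType) (lab : V -> node_kind V Atom)
  (Q : V -> V -> Prop) :
  lambda_graph lab -> query lab Q ->
  (bisimulation lab (propagation lab Q) <->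
   exists R : V -> V -> Prop, bisimulation lab R /\ (forall n m, Q n m -> R n m)).
Proof.
move=> [_ [acyc dom]] qQ; split.
- by move=> bisQ; exists (propagation lab Q); split=> // n m; apply: prop_base.
- move=> [R [bisR QR]]; have [Rh [Rp _]] := bisR.
  split; last split.
  + by move=> n m /(propagation_least Rp QR) /Rh.
  + exact: propagation_propagated.
  + exact: propagation_binder_closed acyc dom qQ bisR QR.
Qed.
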